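(* Let $n>k\ge 1$ and $N=2^{q}$ for an integer $q\ge 0$, and let $G_1,\dots,G_N$ be simple graphs all on the vertex set $[n]$. Let $H$ be the graph on $[n]$ in which $\{1,\dots,k\}$ is a clique, $\{k+1,\dots,n\}$ is independent, and every vertex of $\{k+1,\dots,n\}$ is adjacent to every vertex of $\{1,\dots,k\}$. Build the classification instance $E$ with features $f_1,\dots,f_{2n},d_0$ as the union of blocks $B_1,\dots,B_{2N}$: for odd $i$, $B_i$ contains one negative example with $d_0=i$ and all $f_j=0$, and for each edge $\{a,b\}$ of $H$ one positive example with $d_0=i$, $f_{n+a}=f_{n+b}=1$ and all other $f_j=0$; for even $i$ with $r=i/2$, $B_i$ contains one positive example with $d_0=i$ and all $f_j=0$, and for each edge $\{a,b\}$ of $G_r$ one negative example with $d_0=i$, $f_a=f_b=1$ and all other $f_j=0$. Let $d=\log_2 N+k+1$. Then $E$ admits a decision tree of depth at most $d$ that classifies it if and only if every $G_j$, $j\in[N]$, has a vertex cover of size at most $k$.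
   Context: A classification instance is a finite set of examples (functions from a common feature set to $\mathbb{Z}$), each labeled positive or negative. A decision tree (DT) is a rooted tree whose test nodes $v$ carry a feature $f(v)$ and integer threshold $\lambda(v)$ (examples with $e(f(v))\le\lambda(v)$ go to the left child, others to the right child) and whose leaves are labeled positive or negative; $T$ classifies $E$ if every example reaches a leaf with its own label. Depth = maximum number of test nodes on a root-to-leaf path. *)

From Stdlib Require List.
From mathcomp Require Import all_boot all_order all_algebra.
Set Implicit Arguments. Unset Strict Implicit. Unset Printing Implicit Defensive.
Import Order.TTheory GRing.Theory Num.Theory.
Local Open Scope ring_scope.

(* An example is a function F -> int; a labeled example is (example, label)
   with label true = positive, false = negative. *)
Inductive dtree (F : Type) : Type :=
| DLeaf (b : bool)
| DNode (f : F) (lambda : int) (l r : dtree F).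
Arguments DLeaf {F} b.

Fixpoint dt_eval (F : Type) (T : dtree F) (e : F -> int) : bool :=
  match T with
  | DLeaf b => b
  | DNode f lam l r => if e f <= lam then dt_eval l e else dt_eval r e
  end.

Fixpoint dt_depth (F : Type) (T : dtree F) : nat :=
  match T with
  | DLeaf _ => 0%N
  | DNode _ _ l r => (maxn (dt_depth l) (dt_depth r)).+1
  end.

Definition dt_classifies (F : Type) (T : dtree F) (E : seq ((F -> int) * bool)) :=
  forall p, List.In p E -> dt_eval T p.1 = p.2.

(* ---------- Graphs on [n] (vertices 'I_n, i.e. 0..n-1) ---------- *)
Definition simple_graph (n : nat) (G : rel 'I_n) :=
  symmetric G /\ irreflexive G.

Definition is_vertex_cover (n : nat) (G : rel 'I_n) (C : {set 'I_n}) :=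
  forall a b, G a b -> (a \in C) || (b \in C).

(* H: {0..k-1} clique, {k..n-1} independent, complete between the two parts *)
Definition Hgraph (n k : nat) : rel 'I_n :=
  fun a b => (a != b) && ((a < k)%N || (b < k)%N).

Definition edges (n : nat) (G : rel 'I_n) : seq ('I_n * 'I_n) :=
  flatten [seq [seq (a, b) | b <- filter (fun b : 'I_n => (a < b)%N && G a b) (enum 'I_n)] | a : 'I_n <- enum 'I_n].

(* ---------- Features f_1..f_{2n}, d_0 ----------
   FA a  stands for f_a      (a in [n]),
   FB a  stands for f_{n+a}  (a in [n]),
   D0    stands for d_0. *)
Inductive feat (n : nat) : Type :=
| FA (a : 'I_n) | FB (a : 'I_n) | D0.
Arguments D0 {n}.

Definition zero_ex (n : nat) (i : nat) : feat n -> int :=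
  fun x => match x with D0 => (i%:Z)%R | _ => 0 end.

Definition g_ex (n : nat) (i : nat) (a b : 'I_n) : feat n -> int :=
  fun x => match x with
           | D0 => (i%:Z)%R
           | FA c => if (c == a) || (c == b) then 1 else 0
           | FB _ => 0
           end.

Definition h_ex (n : nat) (i : nat) (a b : 'I_n) : feat n -> int :=
  fun x => match x with
           | D0 => (i%:Z)%R
           | FA _ => 0
           | FB c => if (c == a) || (c == b) then 1 else 0
           end.

(* block B_i, i in 1..2N; G r is the graph G_r (r in 1..N) *)
Definition block (n k : nat) (G : nat -> rel 'I_n) (i : nat)
  : seq ((feat n -> int) * bool) :=
  if odd i then
    (@zero_ex n i, false) :: [seq (@h_ex n i e.1 e.2, true) | e <- edges (@Hgraph n k)]
  else
    (@zero_ex n i, true) :: [seq (@g_ex n i e.1 e.2, false) | e <- edges (G i./2)].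

Definition instanceE (n k N : nat) (G : nat -> rel 'I_n)
  : seq ((feat n -> int) * bool) :=
  flatten [seq @block n k G i | i <- iota 1 (2 * N)].

From Stdlib Require List.
From mathcomp Require Import all_boot all_order all_algebra zify.
Import Order.TTheory GRing.Theory Num.Theory.
Set Implicit Arguments. Unset Strict Implicit. Unset Printing Implicit Defensive.

(* Let z_i be the example of B_i with all features 0 but d_0 = i.  Any example of B_i other
   than z_i differs from it exactly in the two features of an edge, so the features tested on the
   path of z_i contain a vertex cover: of H when i is odd, hence at least k of them, and of
   G_(i/2) when i is even.  The z_i differ only in d_0 and have alternating labels, so the d_0
   tests on their paths satisfy a Kraft inequality in which depths are capped at q + 1:
   sum_i 2^(q+1 - depth_i) <= 2^(q+1).  Each of the 2^(q+1) terms is at least 1, and if G_r had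
   no cover of size k the path of z_(2r) would leave room for at most q tests of d_0, making its
   term at least 2.  Conversely, a binary search on d_0 of depth q + 1 followed, in block B_i,
   by the tests "f <= 0" for the at most k features of a vertex cover, classifies E. *)

Section DecisionPaths.

Variable F : Type.

Fixpoint dt_path (T : dtree F) (e : F -> int) : seq F :=
  match T with
  | DLeaf _ => [::]
  | DNode f lam l r => f :: (if (e f <= lam)%R then dt_path l e else dt_path r e)
  end.

Lemma size_dt_path T e : size (dt_path T e) <= dt_depth T.
Proof.
elim: T => //= f lam l IHl r IHr; rewrite ltnS.
by case: ifP => _; [exact: leq_trans IHl (leq_maxl _ _)|exact: leq_trans IHr (leq_maxr _ _)].
Qed.

Lemma dt_path_separates T e1 e2 :
  dt_eval T e1 != dt_eval T e2 -> has (fun f => e1 f != e2 f) (dt_path T e1).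
Proof.
elim: T => [b|f lam l IHl r IHr] /=; first by rewrite eqxx.
case: (eqVneq (e1 f) (e2 f)) => [<-|//] /=.
by case: ifP.
Qed.

Lemma size_pmap_count_le (A : Type) (h : F -> option A) (P : pred F) (s : seq F) :
  (forall f, P f -> h f = None) -> size (pmap h s) + count P s <= size s.
Proof.
move=> hP; elim: s => //= f s IH; rewrite /oapp.
by case: (boolP (P f)) => [/hP ->|_]; case: (h f) => /=; lia.
Qed.

End DecisionPaths.

Lemma threshold_split (lam : int) lo hi : lo <= hi ->
  exists2 m, lo <= m <= hi & forall i, lo <= i < hi -> (Posz i <= lam)%R = (i < m).
Proof.
case: lam => [p|p] le_lo_hi.
  exists (maxn lo (minn hi p.+1)) => [|i]; first lia.
  by rewrite lez_nat; lia.
by exists lo => [|i]; [rewrite leqnn|lia].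
Qed.

Lemma sum_expn_sub_short (lo hi c : nat) (x : nat -> nat) : hi <= lo.+1 ->
  \sum_(lo <= i < hi) 2 ^ (c - x i) <= 2 ^ c.
Proof.
case: (leqP hi lo) => [hi_le _|lo_lt_hi hi_le]; first by rewrite big_geq.
have -> : hi = lo.+1 by apply/eqP; rewrite eqn_leq hi_le.
by rewrite big_nat1 leq_pexp2l ?leq_subr.
Qed.

Lemma sum_nat_ge_range_succ lo hi i0 (F : nat -> nat) : lo <= i0 < hi ->
  (forall i, lo <= i < hi -> 1 + (i == i0) <= F i) -> (hi - lo).+1 <= \sum_(lo <= i < hi) F i.
Proof.
move=> i0_range F_ge.
apply: leq_trans (_ : \sum_(lo <= i < hi) (1 + (i == i0)) <= _); last first.
  by rewrite big_nat_cond [X in _ <= X]big_nat_cond; apply: leq_sum => i /andP [/F_ge].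
rewrite big_split /= sum1_size size_iota -addn1 leq_add2l.
have -> : \sum_(lo <= i < hi) (i == i0 : nat) = count_mem i0 (index_iota lo hi).
  by rewrite -sum1_count [RHS]big_mkcond; apply: eq_bigr => i _ /=; case: (i == i0).
by rewrite count_uniq_mem ?iota_uniq // mem_index_iota i0_range.
Qed.

Section PointsOnALine.

Variables (F : Type) (axis : pred F) (e : nat -> F -> int).
Hypothesis e_axis : forall i f, axis f -> e i f = Posz i.
Hypothesis e_off_axis : forall i j f, ~~ axis f -> e i f = e j f.

(* Kraft's inequality for the leaves reached by points of a line, with depth counted along the
   axis only and capped at c.  The cap is harmless because consecutive points have different
   labels, hence different leaves, and one of them is at depth at most c. *)
Lemma kraft_on_line (T : dtree F) (c lo hi : nat) :
  (forall i, lo <= i -> i.+1 < hi -> dt_eval T (e i) != dt_eval T (e i.+1)) ->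
  (forall i, lo <= i -> i.+1 < hi ->
     minn (count axis (dt_path T (e i))) (count axis (dt_path T (e i.+1))) <= c) ->
  \sum_(lo <= i < hi) 2 ^ (c - count axis (dt_path T (e i))) <= 2 ^ c.
Proof.
elim: T c lo hi => [b|f lam l IHl r IHr] c lo hi alt shallow.
  apply: sum_expn_sub_short; case: (leqP hi lo.+1) => // lt_lo_hi.
  by have := alt lo (leqnn _) lt_lo_hi; rewrite eqxx.
case: (leqP hi lo) => [hi_le|/ltnW le_lo_hi]; first by rewrite big_geq.
have [axis_f | off_f] := boolP (axis f); last first.
  have e_f i : e i f = e lo f := e_off_axis i lo off_f.
  pose t := if (e lo f <= lam)%R then l else r.
  have eval_t i : dt_eval (DNode f lam l r) (e i) = dt_eval t (e i).
    by rewrite /= e_f /t; case: ifP.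
  have count_t i : count axis (dt_path (DNode f lam l r) (e i)) = count axis (dt_path t (e i)).
    by rewrite /= e_f (negbTE off_f) /t; case: ifP.
  under eq_bigr do rewrite count_t.
  have {}alt i : lo <= i -> i.+1 < hi -> dt_eval t (e i) != dt_eval t (e i.+1).
    by rewrite -!eval_t; exact: alt.
  have {}shallow i : lo <= i -> i.+1 < hi ->
      minn (count axis (dt_path t (e i))) (count axis (dt_path t (e i.+1))) <= c.
    by rewrite -!count_t; exact: shallow.
  by rewrite /t in alt shallow *; case: ifP alt shallow => _; [exact: IHl|exact: IHr].
have [m /andP [lo_le_m m_le_hi] split_m] := threshold_split lam le_lo_hi.
have eval_node i : dt_eval (DNode f lam l r) (e i) =
    if (Posz i <= lam)%R then dt_eval l (e i) else dt_eval r (e i).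
  by rewrite /= e_axis.
have count_node i : count axis (dt_path (DNode f lam l r) (e i)) =
    (count axis (if (Posz i <= lam)%R then dt_path l (e i) else dt_path r (e i))).+1.
  by rewrite /= e_axis // axis_f; case: ifP.
case: c shallow => [|c] shallow.
  apply: sum_expn_sub_short; case: (leqP hi lo.+1) => // lt_lo_hi.
  by have := shallow lo (leqnn _) lt_lo_hi; rewrite !count_node minnSS.
rewrite (big_cat_nat lo_le_m m_le_hi) expnS mul2n -addnn.
apply: leq_add.
- rewrite (@eq_big_nat _ _ _ _ _ _ (fun i => 2 ^ (c - count axis (dt_path l (e i))))); last first.
    move=> i i_lo_m; rewrite count_node split_m; last lia.
    by have -> : i < m by lia.
  apply: IHl => i lo_le_i lt_i_m; have i_hi := leq_trans lt_i_m m_le_hi.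
  + have := alt i lo_le_i i_hi.
    by rewrite !eval_node !split_m ?lt_i_m ?(ltnW lt_i_m) //; lia.
  + have := shallow i lo_le_i i_hi.
    by rewrite !count_node !split_m ?lt_i_m ?(ltnW lt_i_m) ?minnSS //; lia.
- rewrite (@eq_big_nat _ _ _ _ _ _ (fun i => 2 ^ (c - count axis (dt_path r (e i))))); last first.
    move=> i i_m_hi; rewrite count_node split_m; last lia.
    by have -> : (i < m) = false by lia.
  apply: IHr => i m_le_i lt_i_hi; have lo_i := leq_trans lo_le_m m_le_i.
  + have := alt i lo_i lt_i_hi.
    by rewrite !eval_node !split_m ?(leq_gtF m_le_i) ?(leq_gtF (leqW m_le_i)) //; lia.
  + have := shallow i lo_i lt_i_hi.
    by rewrite !count_node !split_m ?(leq_gtF m_le_i) ?(leq_gtF (leqW m_le_i)) ?minnSS //; lia.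
Qed.

End PointsOnALine.

Section TreeBuilders.

Variable F : Type.

Definition all_nonpos_tree (A : Type) (feature : A -> F) (cs : seq A) (b : bool) : dtree F :=
  foldr (fun c t => DNode (feature c) 0%R t (DLeaf (~~ b))) (DLeaf b) cs.

Lemma dt_depth_all_nonpos_tree A (feature : A -> F) cs b :
  dt_depth (all_nonpos_tree feature cs b) = size cs.
Proof. by elim: cs => //= c cs ->; rewrite maxn0. Qed.

Lemma dt_eval_all_nonpos_tree A (feature : A -> F) cs b e :
  dt_eval (all_nonpos_tree feature cs b) e =
  if all (fun c => e (feature c) <= 0)%R cs then b else ~~ b.
Proof. by elim: cs => //= c cs ->; case: (_ <= _)%R. Qed.

Variable axis : F.

Fixpoint axis_search (t : nat -> dtree F) (lo p : nat) : dtree F :=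
  if p is p'.+1 then
    DNode axis (Posz (lo + 2 ^ p').-1) (axis_search t lo p') (axis_search t (lo + 2 ^ p') p')
  else t lo.

Lemma dt_depth_axis_search t k lo p : (forall i, dt_depth (t i) <= k) ->
  dt_depth (axis_search t lo p) <= p + k.
Proof.
move=> t_depth; elim: p lo => [|p IH] lo /=; first exact: t_depth.
by rewrite addSn ltnS geq_max !IH.
Qed.

Lemma dt_eval_axis_search t lo p i e : e axis = Posz i -> lo <= i < lo + 2 ^ p ->
  dt_eval (axis_search t lo p) e = dt_eval (t i) e.
Proof.
move=> e_axis; elim: p lo => [|p IH] lo i_range /=.
  by have -> : i = lo by rewrite expn0 in i_range; lia.
have pos := expn_gt0 2 p; rewrite e_axis lez_nat expnS in i_range *.
by case: leqP => [i_lt|i_ge]; apply: IH; lia.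
Qed.

End TreeBuilders.

Lemma In_mem (T : eqType) (x : T) (s : seq T) : List.In x s <-> x \in s.
Proof.
elim: s => [|y s IH] //=; rewrite in_cons; split.
- by case=> [->|/IH ->]; rewrite ?eqxx ?orbT.
- by case/orP=> [/eqP ->|/IH]; [left|right].
Qed.

Lemma In_flatten_map (A B : Type) (f : A -> seq B) (s : seq A) y :
  List.In y (flatten (map f s)) <-> exists2 x, List.In x s & List.In y (f x).
Proof.
elim: s => [|x s IH] /=; first by split=> // [[]].
rewrite List.in_app_iff IH; split.
- by case=> [|[z]]; [exists x; first left|exists z; first right].
- by case=> z [<-|]; [left|right; exists z].
Qed.

Lemma In_map_edges (A : Type) n (X : rel 'I_n) (h : 'I_n * 'I_n -> A) y :
  List.In y (map h (edges X)) <-> exists a b : 'I_n, [/\ a < b, X a b & y = h (a, b)].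
Proof.
have edgesP a b : ((a, b) \in edges X) = (a < b) && X a b.
  apply/flattenP/andP => [[s /mapP [a' _ ->] /mapP [b' ]]|[lt_ab Xab]].
    by rewrite mem_filter => /andP [/andP [? ?] _] [-> ->].
  exists [seq (a, b') | b' <- [seq b' : 'I_n <- enum 'I_n | (a < b') && X a b']].
    by apply/mapP; exists a; rewrite ?mem_enum.
  by apply/mapP; exists b; rewrite // mem_filter lt_ab Xab mem_enum.
rewrite List.in_map_iff; split.
- by case=> [[a b] [<- /In_mem]]; rewrite edgesP => /andP [? ?]; exists a, b.
- by case=> a [b [lt_ab Xab ->]]; exists (a, b); rewrite In_mem edgesP lt_ab.
Qed.

Section Instance.

Variables (n k N : nat) (G : nat -> rel 'I_n).

Lemma In_instanceE p :
  List.In p (instanceE k N G) <-> exists2 i, 1 <= i <= 2 * N & List.In p (block k G i).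
Proof.
rewrite In_flatten_map.
by split=> [] [i] i_range; exists i; move: i_range; rewrite // In_mem mem_iota add1n ltnS.
Qed.

Lemma zero_ex_in_instanceE i : 1 <= i <= 2 * N ->
  List.In (@zero_ex n i, ~~ odd i) (instanceE k N G).
Proof. by move=> i_range; apply/In_instanceE; exists i; rewrite // /block; case: odd; left. Qed.

Lemma g_ex_in_instanceE i (a b : 'I_n) : 1 <= i <= 2 * N -> ~~ odd i -> a < b -> G i./2 a b ->
  List.In (@g_ex n i a b, false) (instanceE k N G).
Proof.
move=> i_range even_i lt_ab Gab; apply/In_instanceE; exists i => //.
rewrite /block (negbTE even_i); right.
by apply/In_map_edges; exists a, b.
Qed.

Lemma h_ex_in_instanceE i (a b : 'I_n) : 1 <= i <= 2 * N -> odd i -> a < b -> Hgraph k a b ->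
  List.In (@h_ex n i a b, true) (instanceE k N G).
Proof.
move=> i_range odd_i lt_ab Hab; apply/In_instanceE; exists i => //.
rewrite /block odd_i; right.
by apply/In_map_edges; exists a, b.
Qed.

End Instance.

Definition is_d0 n (f : feat n) : bool := if f is D0 then true else false.
Definition fa_vertex n (f : feat n) : option 'I_n := if f is FA a then Some a else None.
Definition fb_vertex n (f : feat n) : option 'I_n := if f is FB a then Some a else None.

Lemma has_zero_ex_neq_g_ex n i (a b : 'I_n) (p : seq (feat n)) :
  has (fun f => @zero_ex n i f != g_ex i a b f) p =
  (a \in pmap (@fa_vertex n) p) || (b \in pmap (@fa_vertex n) p).
Proof.
elim: p => //= f p ->; case: f => [c|c|] /=; rewrite ?eqxx //= !in_cons.
by rewrite (eq_sym a) (eq_sym b); case: (c == a); case: (c == b); rewrite ?orbT.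
Qed.

Lemma has_zero_ex_neq_h_ex n i (a b : 'I_n) (p : seq (feat n)) :
  has (fun f => @zero_ex n i f != h_ex i a b f) p =
  (a \in pmap (@fb_vertex n) p) || (b \in pmap (@fb_vertex n) p).
Proof.
elim: p => //= f p ->; case: f => [c|c|] /=; rewrite ?eqxx //= !in_cons.
by rewrite (eq_sym a) (eq_sym b); case: (c == a); case: (c == b); rewrite ?orbT.
Qed.

Lemma simple_Hgraph n k : simple_graph (@Hgraph n k).
Proof. by split=> [a b|a]; rewrite /Hgraph ?eqxx // eq_sym orbC. Qed.

Lemma vertex_cover_of_lt_edges n (X : rel 'I_n) (C : {set 'I_n}) : simple_graph X ->
  (forall a b : 'I_n, a < b -> X a b -> (a \in C) || (b \in C)) -> is_vertex_cover X C.
Proof.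
case=> X_sym X_irr coverC a b Xab; case: (ltngtP a b) => [lt_ab|lt_ba|/val_inj eq_ab].
- exact: coverC.
- by rewrite orbC; apply: coverC; rewrite // X_sym.
- by rewrite eq_ab X_irr in Xab.
Qed.

(* The vertices 0, ..., k span a clique of H, so a vertex cover misses at most one of them. *)
Lemma Hgraph_cover_card n k (C : {set 'I_n}) : k < n ->
  is_vertex_cover (@Hgraph n k) C -> k <= #|C|.
Proof.
move=> lt_k_n coverC.
pose K := [set widen_ord lt_k_n x | x : 'I_k.+1].
have card_K : #|K| = k.+1.
  by rewrite card_imset ?card_ord // => x y /(congr1 val) /= /val_inj.
have K_le x : x \in K -> x <= k by case/imsetP=> y _ ->; rewrite /= -ltnS.
have missed : #|K :\: C| <= 1.
  rewrite leqNgt; apply/negP=> /card_gt1P [x [y [/setDP [/K_le x_le x_notin_C]]]].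
  move=> /setDP [/K_le y_le y_notin_C] neq_xy.
  have : (x < k) || (y < k).
    apply/contraT; rewrite negb_or -!leqNgt => /andP [? ?].
    have eq_xy : x = y by apply: ord_inj; lia.
    by rewrite eq_xy eqxx in neq_xy.
  by move=> lt_k; have := coverC x y; rewrite /Hgraph neq_xy lt_k (negbTE x_notin_C) (negbTE y_notin_C) => /(_ isT).
have := cardsID C K; rewrite card_K.
have : #|K :&: C| <= #|C| by apply/subset_leq_card/subsetIr.
move: missed; set inside := #|K :&: C|; set outside := #|K :\: C|; lia.
Qed.

Lemma card_path_vertices_count_d0 n (T : dtree (feat n)) e (h : feat n -> option 'I_n) :
  (forall f, is_d0 f -> h f = None) ->
  #|[set a in pmap h (dt_path T e)]| + count (@is_d0 n) (dt_path T e) <= dt_depth T.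
Proof.
move=> h_d0; apply: leq_trans (leq_trans (size_pmap_count_le _ h_d0) (size_dt_path T e)).
by rewrite leq_add2r cardsE card_size.
Qed.

Section PathsOfZeroExamples.

Variables (n k N : nat) (G : nat -> rel 'I_n) (T : dtree (feat n)).
Hypothesis T_classifies : dt_classifies T (instanceE k N G).

Let path i := dt_path T (@zero_ex n i).

Lemma dt_eval_zero_ex i : 1 <= i <= 2 * N -> dt_eval T (@zero_ex n i) = ~~ odd i.
Proof. by move=> i_range; apply: T_classifies (zero_ex_in_instanceE k G i_range). Qed.

Lemma zero_ex_path_covers_G i : 1 <= i <= 2 * N -> ~~ odd i -> simple_graph (G i./2) ->
  is_vertex_cover (G i./2) [set a in pmap (@fa_vertex n) (path i)].
Proof.
move=> i_range even_i simple_G; apply: vertex_cover_of_lt_edges => // a b lt_ab Gab.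
rewrite !inE -(has_zero_ex_neq_g_ex i); apply: dt_path_separates.
rewrite dt_eval_zero_ex // (T_classifies (g_ex_in_instanceE k i_range even_i lt_ab Gab)).
by rewrite even_i.
Qed.

Lemma zero_ex_path_covers_H i : 1 <= i <= 2 * N -> odd i ->
  is_vertex_cover (@Hgraph n k) [set a in pmap (@fb_vertex n) (path i)].
Proof.
move=> i_range odd_i; apply: vertex_cover_of_lt_edges => [|a b lt_ab Hab]; first exact: simple_Hgraph.
rewrite !inE -(has_zero_ex_neq_h_ex i); apply: dt_path_separates.
rewrite dt_eval_zero_ex // (T_classifies (h_ex_in_instanceE G i_range odd_i lt_ab Hab)).
by rewrite odd_i.
Qed.

Lemma count_d0_zero_ex_odd i : k < n -> 1 <= i <= 2 * N -> odd i ->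
  count (@is_d0 n) (path i) + k <= dt_depth T.
Proof.
move=> lt_k_n i_range odd_i.
apply: (leq_trans _ (@card_path_vertices_count_d0 n T (@zero_ex n i) (@fb_vertex n) ltac:(by case))).
by rewrite addnC leq_add2r (Hgraph_cover_card lt_k_n (zero_ex_path_covers_H i_range odd_i)).
Qed.

End PathsOfZeroExamples.

Lemma vertex_covers_of_shallow_tree n k q (G : nat -> rel 'I_n) : k < n ->
  (forall r, 1 <= r <= 2 ^ q -> simple_graph (G r)) ->
  (exists T : dtree (feat n),
      dt_depth T <= q + k + 1 /\ dt_classifies T (instanceE k (2 ^ q) G)) ->
  forall r, 1 <= r <= 2 ^ q ->
    exists C : {set 'I_n}, #|C| <= k /\ is_vertex_cover (G r) C.
Proof.
move=> lt_k_n simple_G [T [depth_T T_cls]] r r_range.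
have i0_range : 1 <= r.*2 <= 2 * 2 ^ q by rewrite -mul2n; lia.
pose C := [set a in pmap (@fa_vertex n) (dt_path T (@zero_ex n r.*2))].
have coverC : is_vertex_cover (G r) C.
  have := zero_ex_path_covers_G T_cls i0_range; rewrite odd_double doubleK.
  by apply=> //; exact: simple_G.
case: (leqP #|C| k) => [small_C|big_C]; first by exists C.
exfalso.
pose d0 i := count (@is_d0 n) (dt_path T (@zero_ex n i)).
have d0_odd i : 1 <= i <= 2 * 2 ^ q -> odd i -> d0 i <= q.+1.
  by move=> i_range odd_i; have := count_d0_zero_ex_odd T_cls lt_k_n i_range odd_i; rewrite /d0; lia.
have d0_i0 : d0 r.*2 <= q.
  have := @card_path_vertices_count_d0 n T (@zero_ex n r.*2) (@fa_vertex n) ltac:(by case).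
  by rewrite -/C /d0; lia.
have kraft : \sum_(1 <= i < (2 * 2 ^ q).+1) 2 ^ (q.+1 - d0 i) <= 2 ^ q.+1.
  apply: (@kraft_on_line _ (@is_d0 n) (@zero_ex n)) => [i [] //|i j [] //|i le1i lt_i|i le1i lt_i].
  - by rewrite !(dt_eval_zero_ex T_cls) ?oddS; [case: (odd i)|lia|lia].
  - case odd_i: (odd i).
      by apply: leq_trans (geq_minl _ _) _; apply: d0_odd => //; lia.
    by apply: leq_trans (geq_minr _ _) _; apply: d0_odd; rewrite ?oddS ?odd_i //; lia.
move: kraft; apply/negP; rewrite -ltnNge.
have := @sum_nat_ge_range_succ 1 (2 * 2 ^ q).+1 r.*2 (fun i => 2 ^ (q.+1 - d0 i)).
rewrite subn1 /= expnS; apply; first lia.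
move=> i _; case: eqP => [->|_]; last by rewrite addn0 expn_gt0.
by rewrite -[1 + _]/(2 ^ 1) leq_pexp2l //; lia.
Qed.

Definition small_cover n k (X : rel 'I_n) : {set 'I_n} :=
  odflt set0 [pick C : {set 'I_n} |
    (#|C| <= k) && [forall a, [forall b, X a b ==> (a \in C) || (b \in C)]]].

Lemma small_cover_card n k (X : rel 'I_n) : #|small_cover k X| <= k.
Proof. by rewrite /small_cover; case: pickP => [C /andP []|_] //=; rewrite cards0. Qed.

Lemma small_cover_covers n k (X : rel 'I_n) :
  (exists C : {set 'I_n}, #|C| <= k /\ is_vertex_cover X C) -> is_vertex_cover X (small_cover k X).
Proof.
move=> [C [card_C cover_C]]; rewrite /small_cover; case: pickP => [D /andP [_ cover_D]|none].
  by move=> a b Xab; move/forallP/(_ a)/forallP/(_ b)/implyP: cover_D; apply.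
have := none C; rewrite card_C /=; move/negP; case.
by apply/forallP=> a; apply/forallP=> b; apply/implyP/cover_C.
Qed.

Lemma card_ord_lt n k (A : {set 'I_n}) : (forall a, a \in A -> a < k) -> #|A| <= k.
Proof.
move=> A_lt; rewrite cardE -(size_map val) -(size_iota 0 k).
apply: uniq_leq_size; first by rewrite map_inj_uniq ?enum_uniq //; exact: val_inj.
by move=> _ /mapP [a a_A ->]; rewrite mem_iota /= A_lt // -mem_enum.
Qed.

Section BlockTrees.

Variables (n k : nat) (G : nat -> rel 'I_n).

Definition block_tree (i : nat) : dtree (feat n) :=
  if odd i then all_nonpos_tree (@FB n) (enum [set c : 'I_n | c < k]) false
  else all_nonpos_tree (@FA n) (enum (small_cover k (G i./2))) true.

Lemma dt_depth_block_tree i : dt_depth (block_tree i) <= k.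
Proof.
rewrite /block_tree; case: odd; rewrite dt_depth_all_nonpos_tree -cardE.
  by apply: card_ord_lt => a; rewrite inE.
exact: small_cover_card.
Qed.

Lemma In_block_d0 i p : List.In p (block k G i) -> p.1 D0 = Posz i.
Proof.
rewrite /block; case: odd => /= [[<-|/In_map_edges [a [b [_ _ ->]]]]|[<-|/In_map_edges [a [b [_ _ ->]]]]] //.
Qed.

Lemma all_nonpos_edge_indicatorF (S : {set 'I_n}) (a b : 'I_n) (value : 'I_n -> int) :
  (forall c, value c = if (c == a) || (c == b) then 1 else 0)%R ->
  (a \in S) || (b \in S) -> all (fun c => value c <= 0)%R (enum S) = false.
Proof.
move=> value_E /orP [a_S|b_S]; apply/negbTE/allPn.
- by exists a; rewrite ?mem_enum // value_E eqxx.
- by exists b; rewrite ?mem_enum // value_E eqxx orbT.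
Qed.

Lemma block_tree_classifies i :
  (~~ odd i -> exists C : {set 'I_n}, #|C| <= k /\ is_vertex_cover (G i./2) C) ->
  dt_classifies (block_tree i) (block k G i).
Proof.
rewrite /block_tree /block; case: odd => [_|/(_ isT)/small_cover_covers cover] p.
- case=> [<-|/In_map_edges [a [b [lt_ab Hab ->]]]]; rewrite /= dt_eval_all_nonpos_tree.
    by rewrite (_ : all _ _ = true) //; apply/allP.
  rewrite (@all_nonpos_edge_indicatorF _ a b) // inE.
  by move: Hab; rewrite /Hgraph => /andP [_]; case: ltnP => //= b_lt a_ge; lia.
- case=> [<-|/In_map_edges [a [b [lt_ab Gab ->]]]]; rewrite /= dt_eval_all_nonpos_tree.
    by rewrite (_ : all _ _ = true) //; apply/allP.
  by rewrite (@all_nonpos_edge_indicatorF _ a b) //; apply: cover.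
Qed.

End BlockTrees.

Lemma shallow_tree_of_vertex_covers n k q (G : nat -> rel 'I_n) :
  (forall r, 1 <= r <= 2 ^ q ->
     exists C : {set 'I_n}, #|C| <= k /\ is_vertex_cover (G r) C) ->
  exists T : dtree (feat n),
    dt_depth T <= q + k + 1 /\ dt_classifies T (instanceE k (2 ^ q) G).
Proof.
move=> covers; exists (axis_search D0 (block_tree k G) 1 q.+1); split.
  by rewrite addn1 -addSn; apply/dt_depth_axis_search/dt_depth_block_tree.
move=> p /In_instanceE [i i_range p_in].
rewrite (@dt_eval_axis_search _ D0 _ 1 q.+1 i _ (In_block_d0 p_in)); last by rewrite expnS; lia.
apply: block_tree_classifies p_in => even_i; apply: covers.
by move: i_range; rewrite -[i in _ <= i <= _](odd_double_half i) (negbTE even_i) -mul2n; lia.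
Qed.

Theorem lemma11 (n k q : nat) (G : nat -> rel 'I_n) :
  (1 <= k)%N -> (k < n)%N ->
  (forall r, (1 <= r <= 2 ^ q)%N -> simple_graph (G r)) ->
  (exists T : dtree (feat n),
      (dt_depth T <= q + k + 1)%N /\ dt_classifies T (@instanceE n k (2 ^ q) G))
  <->
  (forall r, (1 <= r <= 2 ^ q)%N ->
     exists C : {set 'I_n}, (#|C| <= k)%N /\ is_vertex_cover (G r) C).
Proof.
move=> _ lt_k_n simple_G; split.
- exact: vertex_covers_of_shallow_tree.
- exact: shallow_tree_of_vertex_covers.
Qed.
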